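(* Let $(\mathcal{E},U,P)$ be a BCL triple with associated BCL pair $(V_1,V_2)$ on $H^2_{\mathcal{E}}(\mathbb{D})$, and let $\mathcal{S}$ be a closed subspace of $H^2_{\mathcal{E}}(\mathbb{D})$. Then $\mathcal{S}$ is reducing for both $V_1$ and $V_2$ if and only if there exists a closed subspace $\tilde{\mathcal{E}}\subseteq\mathcal{E}$ which is reducing for both $U$ and $P$ such that $\mathcal{S}=H^2_{\tilde{\mathcal{E}}}(\mathbb{D})$ (the $\tilde{\mathcal E}$-valued Hardy space, viewed as a subspace of $H^2_{\mathcal{E}}(\mathbb{D})$).
   Context: All Hilbert spaces are complex and separable; ''projection'' means orthogonal projection and $P^\perp=I-P$. $H^2(\mathbb{D})$ is the Hardy space of the open unit disc, $M_z$ is multiplication by $z$, and for a Hilbert space $\mathcal{E}$, $H^2_{\mathcal{E}}(\mathbb{D})$ is the $\mathcal{E}$-valued Hardy space, identified with $H^2(\mathbb{D})\otimes\mathcal{E}$ via $z^m\eta\mapsto z^m\otimes\eta$. A BCL triple is a triple $(\mathcal{E},U,P)$ where $\mathcal{E}$ is a Hilbert space, $U$ is a unitary on $\mathcal{E}$ and $P$ is a projection on $\mathcal{E}$. The BCL pair associated with it is the pair of commuting isometries on $H^2(\mathbb{D})\otimes\mathcal{E}$ $V_1=(I_{H^2}\otimes P+M_z\otimes P^\perp)(I_{H^2}\otimes U^* )$, $V_2=(I_{H^2}\otimes U)(M_z\otimes P+I_{H^2}\otimes P^\perp)$ (so $V_1V_2=V_2V_1=M_z\otimes I_{\mathcal{E}}$).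 *)

From HB Require Import structures.
From mathcomp Require Import all_boot all_order all_algebra.
From mathcomp Require Import complex.
From mathcomp Require Import all_classical reals topology normedtype sequences.

Set Implicit Arguments.
Unset Strict Implicit.
Unset Printing Implicit Defensive.

Import Order.TTheory GRing.Theory Num.Theory numFieldNormedType.Exports.
Local Open Scope ring_scope.
Local Open Scope classical_set_scope.

(* A Hilbert space is an lmodType over C with an inner product (linear in the
   first variable, conjugate symmetric, positive definite) whose induced norm
   is complete; we also record separability (standing assumption).          *)

Definition inner_product (R : realType) (E : lmodType R[i])
  (ip : E -> E -> R[i]) : Prop :=
  [/\ forall (a : R[i]) (x y z : E), ip (a *: x + y) z = a * ip x z + ip y z,
      forall x y : E, ip y x = conjc (ip x y),
      forall x : E, 0 <= ip x x
    & forall x : E, ip x x = 0 -> x = 0].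

Definition hnorm (R : realType) (E : lmodType R[i]) (ip : E -> E -> R[i])
  (x : E) : R := Num.sqrt (complex.Re (ip x x)).

Definition hconv (R : realType) (E : lmodType R[i]) (ip : E -> E -> R[i])
  (u : nat -> E) (x : E) : Prop :=
  forall eps : R, 0 < eps -> exists N : nat, forall n : nat,
    (N <= n)%N -> hnorm ip (u n - x) < eps.

Definition hcauchy (R : realType) (E : lmodType R[i]) (ip : E -> E -> R[i])
  (u : nat -> E) : Prop :=
  forall eps : R, 0 < eps -> exists N : nat, forall n m : nat,
    (N <= n)%N -> (N <= m)%N -> hnorm ip (u n - u m) < eps.

Definition is_hilbert (R : realType) (E : lmodType R[i])
  (ip : E -> E -> R[i]) : Prop :=
  [/\ inner_product ip,
      forall u : nat -> E, hcauchy ip u -> exists x : E, hconv ip u x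
    &
      exists d : nat -> E, forall (x : E) (eps : R), 0 < eps ->
        exists n : nat, hnorm ip (x - d n) < eps].

Definition closed_subspace (R : realType) (E : lmodType R[i])
  (ip : E -> E -> R[i]) (F : set E) : Prop :=
  [/\ F 0,
      forall (a : R[i]) (x y : E), F x -> F y -> F (a *: x + y)
    & forall (u : nat -> E) (x : E), (forall n, F (u n)) -> hconv ip u x -> F x].

(* Adjoints and reducing subspaces, relative to an inner product  ip  on a
   domain  D  (the whole space, or the Hardy space inside  nat -> E).      *)

Definition is_adjoint_on (R : realType) (X : Type) (ip : X -> X -> R[i])
  (D : set X) (T Ts : X -> X) : Prop :=
  forall x y : X, D x -> D y -> D (Ts y) /\ ip (T x) y = ip x (Ts y).

Definition reducing_on (R : realType) (X : Type) (ip : X -> X -> R[i])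
  (D : set X) (T : X -> X) (S : set X) : Prop :=
  (forall x, S x -> S (T x)) /\
  exists Ts : X -> X, is_adjoint_on ip D T Ts /\ (forall x, S x -> S (Ts x)).

Definition is_linear_op (R : realType) (E : lmodType R[i]) (T : E -> E) : Prop :=
  forall (a : R[i]) (x y : E), T (a *: x + y) = a *: T x + T y.

Definition unitary_with_adjoint (R : realType) (E : lmodType R[i])
  (ip : E -> E -> R[i]) (U Us : E -> E) : Prop :=
  [/\ is_linear_op U, is_adjoint_on ip setT U Us,
      forall x, U (Us x) = x & forall x, Us (U x) = x].

Definition orth_projection (R : realType) (E : lmodType R[i])
  (ip : E -> E -> R[i]) (P : E -> E) : Prop :=
  [/\ is_linear_op P, forall x, P (P x) = P x & is_adjoint_on ip setT P P].

(* The E-valued Hardy space  H^2_E(D) = H^2(D) (x) E , realised through the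
   identification  z^m eta <-> (m-th Taylor coefficient eta), i.e. as
   square-summable coefficient sequences  f : nat -> E .                  *)

Definition in_H2 (R : realType) (E : lmodType R[i]) (ip : E -> E -> R[i])
  (f : nat -> E) : Prop :=
  exists M : R, forall n : nat, \sum_(m < n) hnorm ip (f m) ^+ 2 <= M.

Definition H2inner (R : realType) (E : lmodType R[i]) (ip : E -> E -> R[i])
  (f g : nat -> E) : R[i] :=
  Complex (limn (fun n => \sum_(m < n) complex.Re (ip (f m) (g m))))
          (limn (fun n => \sum_(m < n) complex.Im (ip (f m) (g m)))).

Definition H2norm (R : realType) (E : lmodType R[i]) (ip : E -> E -> R[i])
  (f : nat -> E) : R :=
  Num.sqrt (limn (fun n => \sum_(m < n) hnorm ip (f m) ^+ 2)).

Definition H2_closed_subspace (R : realType) (E : lmodType R[i])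
  (ip : E -> E -> R[i]) (S : set (nat -> E)) : Prop :=
  [/\ S `<=` in_H2 ip,
      S (fun _ => 0),
      forall (a : R[i]) (f g : nat -> E), S f -> S g ->
        S (fun m => a *: f m + g m)
    & forall (u : nat -> nat -> E) (f : nat -> E),
        (forall k, S (u k)) -> in_H2 ip f ->
        (forall eps : R, 0 < eps -> exists N : nat, forall k : nat,
            (N <= k)%N -> H2norm ip (fun m => u k m - f m) < eps) ->
        S f].

Definition H2_of (R : realType) (E : lmodType R[i]) (ip : E -> E -> R[i])
  (Et : set E) : set (nat -> E) :=
  [set f | in_H2 ip f /\ forall m, Et (f m)].

(* The BCL pair of the BCL triple (E, U, P) (Us = adjoint of U, P^perp = I - P):
     V1 = (I (x) P + M_z (x) P^perp)(I (x) Ustar)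
     V2 = (I (x) U)(M_z (x) P + I (x) P^perp)
   acting on coefficient sequences ( (M_z f)_0 = 0, (M_z f)_{m+1} = f_m ). *)

Definition shift (R : realType) (E : lmodType R[i]) (f : nat -> E) : nat -> E :=
  fun m => if m is m'.+1 then f m' else 0.

Definition BCL_V1 (R : realType) (E : lmodType R[i]) (Us P : E -> E)
  (f : nat -> E) : nat -> E :=
  fun m => P (Us (f m)) + shift (fun k => Us (f k) - P (Us (f k))) m.

Definition BCL_V2 (R : realType) (E : lmodType R[i]) (U P : E -> E)
  (f : nat -> E) : nat -> E :=
  fun m => U (shift (fun k => P (f k)) m + (f m - P (f m))).

From Pilot Require Import Defs.
From HB Require Import structures.
From mathcomp Require Import all_boot all_order all_algebra.
From mathcomp Require Import complex.
From mathcomp Require Import all_classical reals topology normedtype sequences.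
From mathcomp Require Import ring lra.

(* Elements of H^2_E are coefficient sequences  f : nat -> E,  M_z is [Defs.shift]
   and  sqn v = ||v||^2.  Both BCL isometries are bidiagonal operators
       (T f)_m = A f_m + B f_(m-1),   i.e.   T = I (x) A + M_z (x) B,
   with A = P U^*, B = P^perp U^* for V1 and A = U P^perp, B = U P for V2.  For
   contractions A, B with adjoints A^*, B^*, such a T preserves H^2_E and has the
   adjoint (T^* g)_m = A^* g_m + B^* g_(m+1): summing by parts, the partial sums of
   <T f, g> and <f, T^* g> differ by <f_(n-1), B^* g_n>, which tends to 0.

   (<=) If E~ reduces U and P it is also invariant under U^* (adjoints are
   unique), hence under A, B, A^*, B^*, so H^2_(E~) reduces V1 and V2.
   (=>) V2 V1 = M_z gives M_z S <= S; testing against the sequences z^m e shows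
   that V1^* V2^* = M_z^*, so also M_z^* S <= S.  A closed subspace invariant under
   M_z and M_z^* is H^2 of its coefficient space E~ = {e | z^0 e in S}, because
   truncations converge in H^2_E; and the invariance of E~ under U, U^* and P is
   read off from the first two coefficients of V_i (z^0 e). *)

Set Implicit Arguments.
Unset Strict Implicit.
Unset Printing Implicit Defensive.

Import Order.TTheory GRing.Theory Num.Theory numFieldNormedType.Exports.
Local Open Scope ring_scope.
Local Open Scope classical_set_scope.

Section InnerProduct.
Variables (R : realType) (E : lmodType R[i]) (ip : E -> E -> R[i]).
Hypothesis Hip : inner_product ip.

Lemma ipZDl a x y z : ip (a *: x + y) z = a * ip x z + ip y z.
Proof. by case: Hip. Qed.

Lemma ip_conj x y : ip y x = conjc (ip x y).
Proof. by case: Hip. Qed.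

Lemma ipDl x y z : ip (x + y) z = ip x z + ip y z.
Proof. by rewrite -[x]scale1r ipZDl mul1r scale1r. Qed.

Lemma ip0l z : ip 0 z = 0.
Proof. by apply: (@addrI _ (ip 0 z)); rewrite addr0 -ipDl addr0. Qed.

Lemma ipZl a x z : ip (a *: x) z = a * ip x z.
Proof. by rewrite -[a *: x]addr0 ipZDl ip0l addr0. Qed.

Lemma ipNl x z : ip (- x) z = - ip x z.
Proof. by rewrite -scaleN1r ipZl mulN1r. Qed.

Lemma ipBl x y z : ip (x - y) z = ip x z - ip y z.
Proof. by rewrite ipDl ipNl. Qed.

Lemma ipDr x y z : ip z (x + y) = ip z x + ip z y.
Proof. by rewrite ip_conj ipDl raddfD (ip_conj x z) (ip_conj y z). Qed.

Lemma ip0r z : ip z 0 = 0.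
Proof. by rewrite ip_conj ip0l raddf0. Qed.

Lemma ipNr x z : ip z (- x) = - ip z x.
Proof. by rewrite ip_conj ipNl raddfN (ip_conj x z). Qed.

Lemma ipBr x y z : ip z (x - y) = ip z x - ip z y.
Proof. by rewrite ipDr ipNr. Qed.

Lemma Re_ip_sym x y : complex.Re (ip y x) = complex.Re (ip x y).
Proof. by rewrite ip_conj; case: (ip x y). Qed.

Definition sqn (v : E) : R := complex.Re (ip v v).

Lemma ipvv_ge0 v : 0 <= ip v v.
Proof. by case: Hip. Qed.

Lemma sqn_ge0 v : 0 <= sqn v.
Proof. by have := ipvv_ge0 v; rewrite lecE => /andP[]. Qed.

Lemma Im_ipvv v : complex.Im (ip v v) = 0.
Proof. by have := ipvv_ge0 v; rewrite lecE => /andP[/eqP ->]. Qed.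

Lemma sqn_eq0 v : sqn v = 0 -> v = 0.
Proof.
move=> h; case: Hip => _ _ _; apply.
by move: h (Im_ipvv v); rewrite /sqn; case: (ip v v) => a b /= -> ->.
Qed.

Lemma hnorm_sqr v : hnorm ip v ^+ 2 = sqn v.
Proof. by rewrite /hnorm sqr_sqrtr // sqn_ge0. Qed.

Lemma sqn0 : sqn 0 = 0.
Proof. by rewrite /sqn ip0l. Qed.

Lemma sqnN v : sqn (- v) = sqn v.
Proof. by rewrite /sqn ipNl ipNr opprK. Qed.

Lemma sqnD x y : sqn (x + y) = sqn x + sqn y + 2 * complex.Re (ip x y).
Proof. by rewrite /sqn ipDl !ipDr !raddfD /= (Re_ip_sym x y); ring. Qed.

Lemma sqnB x y : sqn (x - y) = sqn x + sqn y - 2 * complex.Re (ip x y).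
Proof. by rewrite sqnD sqnN ipNr raddfN /=; ring. Qed.

Lemma sqnD_le x y : sqn (x + y) <= 2 * sqn x + 2 * sqn y.
Proof. by have := sqn_ge0 (x - y); rewrite sqnB sqnD; lra. Qed.

Lemma Re_ip_le x y : 2 * `|complex.Re (ip x y)| <= sqn x + sqn y.
Proof.
have := sqn_ge0 (x - y); have := sqn_ge0 (x + y); rewrite sqnB sqnD.
by case: (ler0P (complex.Re (ip x y))) => _; lra.
Qed.

Lemma Im_ip_le x y : 2 * `|complex.Im (ip x y)| <= sqn x + sqn y.
Proof.
pose mi : R[i] := Complex 0 (-1).
have -> : complex.Im (ip x y) = complex.Re (ip (mi *: x) y).
  by rewrite ipZl; case: (ip x y) => a b /=; ring.
have -> : sqn x = sqn (mi *: x).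
  rewrite /sqn ipZl (ip_conj (mi *: x)) ipZl.
  by move: (Im_ipvv x); case: (ip x x) => a b /= ->; ring.
exact: Re_ip_le.
Qed.

Lemma ip_inj_r u w : (forall e, ip e u = ip e w) -> u = w.
Proof.
move=> h; apply/eqP; rewrite -subr_eq0; apply/eqP; apply: sqn_eq0.
by rewrite /sqn ipBr h subrr.
Qed.

Lemma reducing_adjoint (T Ts : E -> E) (F : set E) :
  is_adjoint_on ip setT T Ts -> reducing_on ip setT T F -> forall x, F x -> F (Ts x).
Proof.
move=> adjT [_ [Ts' [adjT' FTs']]] x Fx.
suff <- : Ts' x = Ts x by apply: FTs'.
by apply: ip_inj_r => e; rewrite -(adjT' e x I I).2 (adjT e x I I).2.
Qed.

End InnerProduct.

Section RealLimits.
Variable R : realType.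

(* Sequences whose difference tends to 0 have the same [limn]
   (whether or not they converge). *)
Lemma limn_eq_cvg0 (u v : R ^nat) :
  (fun n => v n - u n) @ \oo --> 0 -> limn u = limn v.
Proof.
move=> hvu; rewrite /lim /lim_in.
suff -> : (fun l : R => u @ \oo --> l) = (fun l : R => v @ \oo --> l) by [].
apply: funext => l; apply: propext; split => hl.
- have -> : v = u \+ (fun n => v n - u n) by apply: funext => n /=; rewrite subrKC.
  by rewrite -(addr0 l); apply: cvgD.
- have -> : u = v \- (fun n => v n - u n) by apply: funext => n /=; rewrite subKr.
  by rewrite -(subr0 l); apply: cvgB.
Qed.

Lemma cvg0_dominated (w s : R ^nat) :
  (forall n, 2 * `|w n| <= s n) -> s @ \oo --> 0 -> w @ \oo --> 0.
Proof.
move=> ws s0; apply: (@squeeze_cvgr _ _ _ _ (fun n => - s n) s).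
- by near=> n; have := ws n; case: (ler0P (w n)) => hw h; apply/andP; split; lra.
- by rewrite -oppr0; apply: cvgN.
- exact: s0.
Unshelve. all: by end_near.
Qed.

End RealLimits.

Section Subspaces.
Variables (R : realType) (E : lmodType R[i]) (ip : E -> E -> R[i]).
Variable F : set E.
Hypothesis HF : closed_subspace ip F.

Lemma closed_subspace0 : F 0.
Proof. by case: HF. Qed.

Lemma closed_subspaceD x y : F x -> F y -> F (x + y).
Proof. by case: HF => _ hlin _ Fx Fy; rewrite -[x]scale1r; apply: hlin. Qed.

Lemma closed_subspaceN x : F x -> F (- x).
Proof.
case: HF => _ hlin _ Fx; rewrite -scaleN1r -[_ *: x]addr0.
by apply: hlin => //; apply: closed_subspace0.
Qed.

Lemma closed_subspaceB x y : F x -> F y -> F (x - y).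
Proof. by move=> Fx Fy; apply: closed_subspaceD => //; apply: closed_subspaceN. Qed.

End Subspaces.

Section LinearOp.
Variables (R : realType) (E : lmodType R[i]) (T : E -> E).
Hypothesis HT : is_linear_op T.

Lemma linD x y : T (x + y) = T x + T y.
Proof. by rewrite -[x]scale1r HT !scale1r. Qed.

Lemma lin0 : T 0 = 0.
Proof. by apply: (@addrI _ (T 0)); rewrite addr0 -linD addr0. Qed.

Lemma linB x y : T (x - y) = T x - T y.
Proof. by rewrite addrC -scaleN1r HT scaleN1r addrC. Qed.

End LinearOp.

Section HardySpace.
Variables (R : realType) (E : lmodType R[i]) (ip : E -> E -> R[i]).
Hypothesis Hip : inner_product ip.

Lemma in_H2P f : in_H2 ip f <-> exists M, forall n, \sum_(m < n) sqn ip (f m) <= M.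
Proof.
have e n : \sum_(m < n) hnorm ip (f m) ^+ 2 = \sum_(m < n) sqn ip (f m).
  by apply: eq_bigr => m _; apply: (hnorm_sqr Hip).
by split => -[M hM]; exists M => n; move: (hM n); rewrite e.
Qed.

Lemma in_H2_add f g : in_H2 ip f -> in_H2 ip g -> in_H2 ip (fun m => f m + g m).
Proof.
move=> /in_H2P[M hM] /in_H2P[N hN]; apply/in_H2P; exists (2 * M + 2 * N) => n.
apply: (@le_trans _ _ (\sum_(m < n) (2 * sqn ip (f m) + 2 * sqn ip (g m)))).
  by apply: ler_sum => m _; apply: (sqnD_le Hip).
by rewrite big_split /= -!mulr_sumr; have := hM n; have := hN n; lra.
Qed.

Lemma in_H2_contract (A : E -> E) f :
  (forall v, sqn ip (A v) <= sqn ip v) -> in_H2 ip f -> in_H2 ip (fun m => A (f m)).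
Proof.
move=> hA /in_H2P[M hM]; apply/in_H2P; exists M => n.
by apply: le_trans (hM n); apply: ler_sum.
Qed.

Lemma in_H2_shift f : in_H2 ip f -> in_H2 ip (Defs.shift f).
Proof.
move=> /in_H2P[M hM]; apply/in_H2P; exists M => -[|n].
  by rewrite big_ord0; have := hM 0; rewrite big_ord0.
by rewrite big_ord_recl /= (sqn0 Hip) add0r; apply: hM.
Qed.

Lemma in_H2_tail f : in_H2 ip f -> in_H2 ip (fun m => f m.+1).
Proof.
move=> /in_H2P[M hM]; apply/in_H2P; exists M => n.
by apply: le_trans (hM n.+1); rewrite big_ord_recl /= lerDr (sqn_ge0 Hip).
Qed.

Lemma in_H2_cvg f : in_H2 ip f -> cvgn (fun n => \sum_(m < n) sqn ip (f m)).
Proof.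
move=> /in_H2P[M hM].
suff : cvgn (series (fun m => sqn ip (f m))) by rewrite seriesEord.
apply: nondecreasing_is_cvgn.
  by apply: (@nondecreasing_series _ _ predT) => m _ _; apply: (sqn_ge0 Hip).
by exists M => _ [n _ <-] /=; rewrite seriesEord; apply: hM.
Qed.

Lemma in_H2_sqn_cvg0 f : in_H2 ip f -> (fun n => sqn ip (f n)) @ \oo --> 0.
Proof.
move=> /in_H2_cvg cvg_sums; apply: cvg_series_cvg_0.
by rewrite seriesEord.
Qed.

(* The sequence  delta m e  is  z^m e. *)
Definition delta (m : nat) (e : E) : nat -> E := fun k => if k == m then e else 0.

Lemma sum_delta (V : zmodType) (F : nat -> V) m n :
  (forall k, k != m -> F k = 0) -> (m < n)%N -> \sum_(k < n) F k = F m.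
Proof.
move=> F0 mn; rewrite (bigD1 (Ordinal mn)) //= big1 ?addr0 // => k nk.
by apply: F0; apply: contraNneq nk => km; apply/eqP/val_inj.
Qed.

Lemma shift_delta m e : Defs.shift (delta m e) = delta m.+1 e.
Proof. by apply: funext => -[|k]. Qed.

Lemma delta_H2 m e : in_H2 ip (delta m e).
Proof.
apply/in_H2P; exists (sqn ip e) => n; case: (ltnP m n) => mn.
  rewrite (@sum_delta _ (fun k => sqn ip (delta m e k)) m) // /delta ?eqxx //.
  by move=> k /negPf ->; apply: (sqn0 Hip).
rewrite big1 ?(sqn_ge0 Hip) // => k _.
by rewrite /delta ltn_eqF ?(sqn0 Hip) // (leq_trans (ltn_ord k)).
Qed.

Lemma H2inner_delta m e g : H2inner ip (delta m e) g = ip e (g m).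
Proof.
have ev (pr : R[i] -> R) : pr 0 = 0 ->
    limn (fun n => \sum_(k < n) pr (ip (delta m e k) (g k))) = pr (ip e (g m)).
  move=> pr0; apply: cvg_lim => //; apply: cvg_near_cst; exists m.+1 => // n /= mn.
  rewrite (@sum_delta _ (fun k => pr (ip (delta m e k) (g k))) m) // /delta ?eqxx //.
  by move=> k /negPf ->; rewrite (ip0l Hip).
by rewrite /H2inner !ev //; case: (ip e (g m)).
Qed.

(* ||z^m e|| = ||e||;  needed to transfer norm convergence from E to H^2_E. *)
Lemma H2norm_delta m e : H2norm ip (delta m e) = hnorm ip e.
Proof.
rewrite /H2norm.
have -> : limn (fun n => \sum_(k < n) hnorm ip (delta m e k) ^+ 2) = hnorm ip e ^+ 2.
  apply: cvg_lim => //; apply: cvg_near_cst; exists m.+1 => // n /= mn.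
  rewrite (@sum_delta _ (fun k => hnorm ip (delta m e k) ^+ 2) m) // /delta ?eqxx //.
  by move=> k /negPf ->; rewrite (hnorm_sqr Hip) (sqn0 Hip).
by rewrite sqrtr_sqr ger0_norm // sqrtr_ge0.
Qed.

Definition trunc (k : nat) (f : nat -> E) : nat -> E :=
  fun m => if (m < k)%N then f m else 0.

Lemma trunc_cvg f : in_H2 ip f -> forall eps : R, 0 < eps ->
  exists N, forall k, (N <= k)%N -> H2norm ip (fun m => trunc k f m - f m) < eps.
Proof.
move=> Df eps eps0.
set s := fun n => \sum_(m < n) sqn ip (f m).
have cvg_s : s @ \oo --> limn s by apply: in_H2_cvg.
have /cvgrPdist_lt near_s := cvg_s.
have [N _ HN] := near_s _ (exprn_gt0 2 eps0).
exists N => k Nk.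
have tail j : \sum_(m < k + j) hnorm ip (trunc k f m - f m) ^+ 2 = s (k + j)%N - s k.
  elim: j => [|j IH].
    rewrite addn0 subrr big1 // => m _.
    by rewrite /trunc ltn_ord subrr (hnorm_sqr Hip) (sqn0 Hip).
  rewrite addnS big_ord_recr /= IH /s big_ord_recr /= /trunc.
  by rewrite ltnNge leq_addr /= sub0r (hnorm_sqr Hip) (sqnN Hip); ring.
have lim_tail :
    limn (fun n => \sum_(m < n) hnorm ip (trunc k f m - f m) ^+ 2) = limn s - s k.
  rewrite (@limn_eq_cvg0 _ _ (fun n => s n - s k)).
    by apply: cvg_lim => //; apply: cvgB => //; apply: cvg_cst.
  apply: cvg_near_cst; exists k => // n /= kn.
  by rewrite -(subnKC kn) tail subrr.
rewrite /H2norm lim_tail -(gtr0_norm eps0) -sqrtr_sqr ltr_sqrt ?exprn_gt0 //.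
by have := HN k Nk; rewrite ltr_norml => /andP[]; lra.
Qed.

(* If S reduces two operators V, W with  W V = M_z , then S is invariant under
   the backward shift  M_z^* = V^* W^* ; the identity is tested against  z^m e. *)
Lemma reducing_backward_shift (V W : (nat -> E) -> nat -> E) (S : set (nat -> E)) :
  S `<=` in_H2 ip ->
  (forall f, in_H2 ip f -> in_H2 ip (V f)) ->
  (forall f, W (V f) = Defs.shift f) ->
  reducing_on (H2inner ip) (in_H2 ip) V S ->
  reducing_on (H2inner ip) (in_H2 ip) W S ->
  forall f, S f -> S (fun m => f m.+1).
Proof.
move=> SH2 VH2 WV [_ [Vs [adjV SVs]]] [_ [Ws [adjW SWs]]] f Sf.
have Df := SH2 f Sf.
suff <- : Vs (Ws f) = (fun m => f m.+1) by apply: SVs; apply: SWs.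
apply: funext => m; apply: (ip_inj_r Hip) => e.
have Dd := delta_H2 m e.
have DWs : in_H2 ip (Ws f) := (adjW _ _ Dd Df).1.
rewrite -H2inner_delta -(adjV _ _ Dd DWs).2 -(adjW _ _ (VH2 _ Dd) Df).2.
by rewrite WV shift_delta H2inner_delta.
Qed.

End HardySpace.

Section Bidiagonal.
Variables (R : realType) (E : lmodType R[i]) (ip : E -> E -> R[i]).
Hypothesis Hip : inner_product ip.

Variables (A B As Bs : E -> E).
Hypothesis adjA : forall a b, ip (A a) b = ip a (As b).
Hypothesis adjB : forall a b, ip (B a) b = ip a (Bs b).
Hypothesis contrA : forall v, sqn ip (A v) <= sqn ip v.
Hypothesis contrB : forall v, sqn ip (B v) <= sqn ip v.
Hypothesis contrAs : forall v, sqn ip (As v) <= sqn ip v.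
Hypothesis contrBs : forall v, sqn ip (Bs v) <= sqn ip v.

Definition bidiag (f : nat -> E) : nat -> E :=
  fun m => A (f m) + Defs.shift (fun k => B (f k)) m.

Definition bidiag_adj (g : nat -> E) : nat -> E :=
  fun m => As (g m) + Bs (g m.+1).

Lemma bidiag_H2 f : in_H2 ip f -> in_H2 ip (bidiag f).
Proof.
move=> Df; apply: (in_H2_add Hip); first exact: in_H2_contract.
by apply: (in_H2_shift Hip); apply: in_H2_contract.
Qed.

Lemma bidiag_adj_H2 g : in_H2 ip g -> in_H2 ip (bidiag_adj g).
Proof.
move=> Dg; apply: (in_H2_add Hip); first exact: in_H2_contract.
by apply: in_H2_contract => //; apply: (in_H2_tail Hip).
Qed.

Lemma bidiag_partial_sum (f g : nat -> E) (n : nat) :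
  \sum_(m < n) ip (bidiag f m) (g m) =
  \sum_(m < n) ip (f m) (bidiag_adj g m) - ip (Defs.shift f n) (Bs (g n)).
Proof.
elim: n => [|n IH]; first by rewrite !big_ord0 /= (ip0l Hip) subr0.
rewrite !big_ord_recr /= IH /bidiag /bidiag_adj (ipDl Hip) adjA (ipDr Hip).
have -> : ip (Defs.shift (fun k => B (f k)) n) (g n) = ip (Defs.shift f n) (Bs (g n)).
  by case: n {IH} => [|n] /=; rewrite ?(ip0l Hip) ?adjB.
by ring.
Qed.

(* The boundary term tends to 0, so  bidiag_adj  is the adjoint of  bidiag. *)
Lemma bidiag_adjoint : is_adjoint_on (H2inner ip) (in_H2 ip) bidiag bidiag_adj.
Proof.
move=> f g Df Dg; split; first exact: bidiag_adj_H2.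
pose bd n := ip (Defs.shift f n) (Bs (g n)).
have bd_sum n : \sum_(m < n) ip (f m) (bidiag_adj g m) -
    \sum_(m < n) ip (bidiag f m) (g m) = bd n.
  by rewrite bidiag_partial_sum opprB addrC subrK.
have dom0 : (fun n => sqn ip (Defs.shift f n) + sqn ip (Bs (g n))) @ \oo --> 0.
  rewrite -[0]addr0; apply: cvgD; apply: (in_H2_sqn_cvg0 Hip).
    exact: (in_H2_shift Hip).
  exact: (in_H2_contract Hip).
rewrite /H2inner; congr Complex; apply: limn_eq_cvg0.
- under eq_fun do rewrite -!raddf_sum -raddfB bd_sum.
  by apply: (cvg0_dominated _ dom0) => n; apply: (Re_ip_le Hip).
- under eq_fun do rewrite -!raddf_sum -raddfB bd_sum.
  by apply: (cvg0_dominated _ dom0) => n; apply: (Im_ip_le Hip).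
Qed.

Lemma bidiag_reducing (F : set E) :
  closed_subspace ip F ->
  (forall v, F v -> F (A v)) -> (forall v, F v -> F (B v)) ->
  (forall v, F v -> F (As v)) -> (forall v, F v -> F (Bs v)) ->
  reducing_on (H2inner ip) (in_H2 ip) bidiag (H2_of ip F).
Proof.
move=> HF FA FB FAs FBs; split.
  move=> f [Df Ff]; split; first exact: bidiag_H2.
  move=> m; apply: (closed_subspaceD HF); first by apply: FA.
  by case: m => [|m] /=; [apply: (closed_subspace0 HF) | apply: FB].
exists bidiag_adj; split; first exact: bidiag_adjoint.
move=> g [Dg Fg]; split; first exact: bidiag_adj_H2.
by move=> m; apply: (closed_subspaceD HF); [apply: FAs | apply: FBs].
Qed.

End Bidiagonal.

Section BCLPair.
Variables (R : realType) (E : lmodType R[i]) (ip : E -> E -> R[i]).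
Hypothesis Hip : inner_product ip.
Variables (U Us P : E -> E).
Hypothesis HU : unitary_with_adjoint ip U Us.
Hypothesis HP : orth_projection ip P.

Lemma U_linear : is_linear_op U. Proof. by case: HU. Qed.
Lemma P_linear : is_linear_op P. Proof. by case: HP. Qed.
Lemma UUs x : U (Us x) = x. Proof. by case: HU. Qed.
Lemma UsU x : Us (U x) = x. Proof. by case: HU. Qed.
Lemma P_idem x : P (P x) = P x. Proof. by case: HP. Qed.

Lemma U_adjoint : is_adjoint_on ip setT U Us.
Proof. by case: HU. Qed.

Lemma adjU a b : ip (U a) b = ip a (Us b).
Proof. by case: (U_adjoint (x := a) (y := b) I I). Qed.

Lemma adjUs a b : ip (Us a) b = ip a (U b).
Proof. by rewrite (ip_conj Hip) -adjU -(ip_conj Hip). Qed.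

Lemma adjP a b : ip (P a) b = ip a (P b).
Proof. by case: HP => _ _ /(_ a b I I) []. Qed.

Lemma adjPc a b : ip (a - P a) b = ip a (b - P b).
Proof. by rewrite (ipBl Hip) adjP (ipBr Hip). Qed.

Lemma Us0 : Us 0 = 0.
Proof. by rewrite -{1}(lin0 U_linear) UsU. Qed.

Lemma P_Pc v : P (v - P v) = 0.
Proof. by rewrite (linB P_linear) P_idem subrr. Qed.

Lemma sqnU v : sqn ip (U v) = sqn ip v.
Proof. by rewrite /sqn adjU UsU. Qed.

Lemma sqnUs v : sqn ip (Us v) = sqn ip v.
Proof. by rewrite -{2}(UUs v) sqnU. Qed.

Lemma sqn_pythagoras v : sqn ip v = sqn ip (P v) + sqn ip (v - P v).
Proof.
rewrite -{1}(subrKC (P v) v) (sqnD Hip (P v)) adjP P_Pc (ip0r Hip) /=.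
by rewrite mulr0 addr0.
Qed.

Lemma sqnP_le v : sqn ip (P v) <= sqn ip v.
Proof. by rewrite (sqn_pythagoras v) lerDl (sqn_ge0 Hip). Qed.

Lemma sqnPc_le v : sqn ip (v - P v) <= sqn ip v.
Proof. by rewrite (sqn_pythagoras v) lerDr (sqn_ge0 Hip). Qed.

Lemma V1_bidiag :
  BCL_V1 Us P = bidiag (fun v => P (Us v)) (fun v => Us v - P (Us v)).
Proof. by []. Qed.

Lemma V2_bidiag : BCL_V2 U P = bidiag (fun v => U (v - P v)) (fun v => U (P v)).
Proof.
apply: funext => f; apply: funext => m.
rewrite /BCL_V2 /bidiag (linD U_linear) addrC; congr (_ + _).
by case: m => [|m] //=; rewrite (lin0 U_linear).
Qed.

Lemma V1_H2 f : in_H2 ip f -> in_H2 ip (BCL_V1 Us P f).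
Proof.
rewrite V1_bidiag; apply: (bidiag_H2 Hip) => v.
  by rewrite -(sqnUs v) sqnP_le.
by rewrite -(sqnUs v) sqnPc_le.
Qed.

Lemma V2V1_shift f : BCL_V2 U P (BCL_V1 Us P f) = Defs.shift f.
Proof.
apply: funext => m.
have PV1 k : P (BCL_V1 Us P f k) = P (Us (f k)).
  rewrite /BCL_V1 (linD P_linear) P_idem.
  by case: k => [|k] /=; rewrite ?(lin0 P_linear) ?P_Pc addr0.
have PcV1 k : BCL_V1 Us P f k - P (BCL_V1 Us P f k) =
    Defs.shift (fun j => Us (f j) - P (Us (f j))) k.
  by rewrite PV1 /BCL_V1 [X in X - _]addrC addrK.
rewrite /BCL_V2 PcV1; case: m => [|m] /=.
  by rewrite addr0 (lin0 U_linear).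
by rewrite PV1 subrKC UUs.
Qed.

Lemma BCL_reducing_H2_of (F : set E) :
  closed_subspace ip F -> reducing_on ip setT U F -> reducing_on ip setT P F ->
  reducing_on (H2inner ip) (in_H2 ip) (BCL_V1 Us P) (H2_of ip F) /\
  reducing_on (H2inner ip) (in_H2 ip) (BCL_V2 U P) (H2_of ip F).
Proof.
move=> HF RU RP.
have FU : forall v, F v -> F (U v) := RU.1.
have FP : forall v, F v -> F (P v) := RP.1.
have FUs : forall v, F v -> F (Us v) := reducing_adjoint Hip U_adjoint RU.
have FPc v : F v -> F (v - P v).
  by move=> Fv; apply: (closed_subspaceB HF) => //; apply: FP.
split.
- rewrite V1_bidiag.
  apply: (bidiag_reducing Hip (As := fun v => U (P v)) (Bs := fun v => U (v - P v)))
    => // [a b | a b | v | v | v | v | v Fv | v Fv | v Fv | v Fv].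
  + by rewrite adjP adjUs.
  + by rewrite adjPc adjUs.
  + by rewrite -(sqnUs v) sqnP_le.
  + by rewrite -(sqnUs v) sqnPc_le.
  + by rewrite sqnU sqnP_le.
  + by rewrite sqnU sqnPc_le.
  + by apply/FP/FUs.
  + by apply/FPc/FUs.
  + by apply/FU/FP.
  + by apply/FU/FPc.
- rewrite V2_bidiag.
  apply: (bidiag_reducing Hip (As := fun v => Us v - P (Us v)) (Bs := fun v => P (Us v)))
    => // [a b | a b | v | v | v | v | v Fv | v Fv | v Fv | v Fv].
  + by rewrite adjU adjPc.
  + by rewrite adjU adjP.
  + by rewrite sqnU sqnPc_le.
  + by rewrite sqnU sqnP_le.
  + by rewrite -(sqnUs v) sqnPc_le.
  + by rewrite -(sqnUs v) sqnP_le.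
  + by apply/FU/FPc.
  + by apply/FU/FP.
  + by apply/FPc/FUs.
  + by apply/FP/FUs.
Qed.

End BCLPair.

Section CoefficientSpace.
Variables (R : realType) (E : lmodType R[i]) (ip : E -> E -> R[i]).
Hypothesis Hip : inner_product ip.

Variable S : set (nat -> E).
Hypothesis HS : H2_closed_subspace ip S.
Hypothesis S_shift : forall f, S f -> S (Defs.shift f).
Hypothesis S_tail : forall f, S f -> S (fun m => f m.+1).

Lemma S_H2 f : S f -> in_H2 ip f. Proof. by case: HS => + _ _ _; apply. Qed.
Lemma S_zero : S (fun _ => 0). Proof. by case: HS. Qed.

Lemma S_lin a f g : S f -> S g -> S (fun m => a *: f m + g m).
Proof. by case: HS => _ _ + _; apply. Qed.

Definition coef_space : set E := [set e | S (delta 0 e)].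

(* f_0 = f - M_z M_z^* f  lies in the coefficient space; the other
   coefficients follow with the backward shift. *)
Lemma coef_space_coef f m : S f -> coef_space (f m).
Proof.
elim: m f => [|m IH] f Sf; last exact: (IH _ (S_tail Sf)).
rewrite /coef_space /=.
have -> : delta 0 (f 0) =
    (fun k => (-1) *: Defs.shift (fun m => f m.+1) k + f k).
  apply: funext => -[|k] /=; first by rewrite scaler0 add0r.
  by rewrite scaleN1r addNr.
by apply: S_lin => //; apply/S_shift/S_tail.
Qed.

Lemma coef_space_delta m e : coef_space e -> S (delta m e).
Proof.
move=> Se; elim: m => [//|m IH].
by rewrite -shift_delta; apply: S_shift.
Qed.

(* The coefficient space is closed, since  ||z^0 e|| = ||e||. *)
Lemma coef_space_closed : closed_subspace ip coef_space.
Proof.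
split.
- rewrite /coef_space /= (_ : delta 0 0 = fun _ => 0); first exact: S_zero.
  by apply: funext => -[|k].
- move=> a x y Sx Sy; rewrite /coef_space /=.
  rewrite (_ : delta 0 (a *: x + y) = fun m => a *: delta 0 x m + delta 0 y m).
    exact: S_lin.
  by apply: funext => -[|k] //=; rewrite scaler0 addr0.
- move=> u x Su ux; case: HS => _ _ _ S_closed.
  apply: (S_closed (fun k => delta 0 (u k))) => //; first exact: delta_H2.
  move=> eps eps0; have [N HN] := ux eps eps0; exists N => k Nk.
  have -> : (fun m => delta 0 (u k) m - delta 0 x m) = delta 0 (u k - x).
    by apply: funext => -[|m] //=; rewrite subrr.
  by rewrite (H2norm_delta Hip); apply: HN.
Qed.

(* S is the Hardy space of its coefficient space: it contains the
   truncations of each element of H^2_(coef_space), hence their limits. *)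
Lemma coef_space_H2 : S = H2_of ip coef_space.
Proof.
apply/seteqP; split=> f.
  by move=> Sf; split=> [|m]; [apply: S_H2 | apply: coef_space_coef].
move=> [Df Cf].
have S_trunc k : S (trunc k f).
  elim: k => [|k IH].
    by rewrite (_ : trunc 0 f = fun _ => 0); [exact: S_zero | apply: funext].
  rewrite (_ : trunc k.+1 f = fun m => 1 *: delta k (f k) m + trunc k f m).
    by apply: S_lin => //; apply: coef_space_delta.
  apply: funext => m; rewrite /trunc /delta scale1r.
  case: (ltngtP m k) => [mk | km | ->].
  - by rewrite add0r ltnS ltnW.
  - by rewrite addr0 ltnS leqNgt km.
  - by rewrite ltnSn addr0.
by case: HS => _ _ _ S_closed; apply: (S_closed _ _ S_trunc Df); apply: trunc_cvg.
Qed.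

End CoefficientSpace.

Section ForwardDirection.
Variables (R : realType) (E : lmodType R[i]) (ip : E -> E -> R[i]).
Hypothesis Hip : inner_product ip.
Variables (U Us P : E -> E).
Hypothesis HU : unitary_with_adjoint ip U Us.
Hypothesis HP : orth_projection ip P.

Variable S : set (nat -> E).
Hypothesis HS : H2_closed_subspace ip S.
Hypothesis R1 : reducing_on (H2inner ip) (in_H2 ip) (BCL_V1 Us P) S.
Hypothesis R2 : reducing_on (H2inner ip) (in_H2 ip) (BCL_V2 U P) S.

(* S is invariant under  M_z = V2 V1 ... *)
Lemma reducing_S_shift f : S f -> S (Defs.shift f).
Proof. by move=> Sf; rewrite -(V2V1_shift HU HP); apply: R2.1; apply: R1.1. Qed.

(* ... and under  M_z^* = V1^* V2^* . *)
Lemma reducing_S_tail f : S f -> S (fun m => f m.+1).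
Proof.
apply: (reducing_backward_shift Hip (S_H2 HS) _ (V2V1_shift HU HP) R1 R2).
exact: (V1_H2 Hip HU HP).
Qed.

Let C := coef_space S.

Lemma coef_V1 e m : C e -> C (BCL_V1 Us P (delta 0 e) m).
Proof.
move=> Ce; apply: (coef_space_coef HS reducing_S_shift reducing_S_tail).
by apply: R1.1; apply: (coef_space_delta reducing_S_shift).
Qed.

Lemma coef_V2 e m : C e -> C (BCL_V2 U P (delta 0 e) m).
Proof.
move=> Ce; apply: (coef_space_coef HS reducing_S_shift reducing_S_tail).
by apply: R2.1; apply: (coef_space_delta reducing_S_shift).
Qed.

(* U e = (V2 z^0 e)_0 + (V2 z^0 e)_1 = U P^perp e + U P e. *)
Lemma coef_U e : C e -> C (U e).
Proof.
move=> Ce; have := closed_subspaceD (coef_space_closed Hip HS) (coef_V2 0 Ce) (coef_V2 1 Ce).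
rewrite /BCL_V2 /delta /= (lin0 (P_linear HP)) add0r subrr addr0.
by rewrite -(linD (U_linear HU)) subrK.
Qed.

(* U^* e = (V1 z^0 e)_0 + (V1 z^0 e)_1 = P U^* e + P^perp U^* e. *)
Lemma coef_Us e : C e -> C (Us e).
Proof.
move=> Ce; have := closed_subspaceD (coef_space_closed Hip HS) (coef_V1 0 Ce) (coef_V1 1 Ce).
by rewrite /BCL_V1 /delta /= (Us0 HU) (lin0 (P_linear HP)) addr0 add0r subrKC.
Qed.

(* P e = (V1 z^0 (U e))_0. *)
Lemma coef_P e : C e -> C (P e).
Proof.
by move=> /coef_U /(coef_V1 0); rewrite /BCL_V1 /delta /= addr0 (UsU HU).
Qed.

End ForwardDirection.
(* (=>) takes the coefficient space of S; (<=) is [BCL_reducing_H2_of]. *)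
Theorem lemma2p1 (R : realType) (E : lmodType R[i]) (ip : E -> E -> R[i])
  (U Us P : E -> E) (S : set (nat -> E)) :
  is_hilbert ip ->
  unitary_with_adjoint ip U Us ->
  orth_projection ip P ->
  H2_closed_subspace ip S ->
  (reducing_on (H2inner ip) (in_H2 ip) (BCL_V1 Us P) S /\
   reducing_on (H2inner ip) (in_H2 ip) (BCL_V2 U P) S)
  <->
  (exists Et : set E,
     [/\ closed_subspace ip Et,
         reducing_on ip setT U Et,
         reducing_on ip setT P Et
       & S = H2_of ip Et]).
Proof.
move=> [Hip _ _] HU HP HS; split; last first.
  by move=> [F [HF RU RP ->]]; apply: BCL_reducing_H2_of.
move=> [R1 R2]; exists (coef_space S); split.
- exact: coef_space_closed.
- split; first exact: (coef_U Hip HU HP HS R1 R2).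
  exists Us; split; first exact: U_adjoint.
  exact: (coef_Us Hip HU HP HS R1 R2).
- split; first exact: (coef_P Hip HU HP HS R1 R2).
  exists P; split; first by case: HP.
  exact: (coef_P Hip HU HP HS R1 R2).
- apply: (coef_space_H2 Hip HS).
  + exact: (reducing_S_shift HU HP R1 R2).
  + exact: (reducing_S_tail Hip HU HP HS R1 R2).
Qed.
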